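(* Let $a\in\mathbb{R}$ and let $f$ be a real function analytic on an open interval containing $a$. For $b>a$ (with $b$ in that interval), fix an antiderivative $f^{(-1)}$ of $f$ and define the characteristic numbers $c_n^f=\int_a^b f^{(n)}(x)\,dx=f^{(n-1)}(b)-f^{(n-1)}(a)$ for $n\ge 0$, and for $N\in\mathbb{N}_0$ define \[ \mathcal{A}^{f,B}_{(a,b),N}(x)=\sum_{n=0}^{N} c_n^f\,(b-a)^{n-1}\,\frac{1}{n!}\,B_n\!\left(\frac{x-a}{b-a}\right), \] where $B_n$ is the $n$-th Bernoulli polynomial. Then for every fixed $N$ and every real $x$, \[ \lim_{b\to a}\mathcal{A}^{f,B}_{(a,b),N}(x)=\sum_{k=0}^{N}\frac{f^{(k)}(a)}{k!}(x-a)^k . \]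
   Context: Bernoulli polynomials: $B_n(x)=\sum_{k=0}^{n}\binom{n}{k}B_{n-k}x^k$ where $B_j$ are the Bernoulli numbers; they satisfy $B_0=1$, $B_n'=nB_{n-1}$, $\int_0^1B_n=0$ for $n\ge1$. The term $n=0$ uses $c_0^f=\int_a^b f(x)\,dx$. *)

From Stdlib Require Import Reals Lra Lia List.
From Coquelicot Require Import Coquelicot.
Open Scope R_scope.

(* Bernoulli numbers B_0 .. B_n, with B_0 = 1 and, for m >= 1,
   sum_{k=0}^{m} C(m+1,k) B_k = 0   (so B_1 = -1/2). *)
Fixpoint bern_list (n : nat) : list R :=
  match n with
  | O => 1 :: nil
  | S p =>
      let l := bern_list p in
      l ++ (- / INR (p + 2) *
            sum_f_R0 (fun k => Binomial.C (p + 2) k * nth k l 0) p) :: nil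
  end.

Definition bernoulli_number (n : nat) : R := nth n (bern_list n) 0.

Definition bernoulli_poly (n : nat) (x : R) : R :=
  sum_f_R0 (fun k => Binomial.C n k * bernoulli_number (n - k) * x ^ k) n.

Definition analytic_on (f : R -> R) (l u : R) : Prop :=
  forall y, l < y < u ->
    exists (r : posreal) (c : nat -> R),
      forall x, Rabs (x - y) < r -> is_pseries c (x - y) (f x).

Definition char_number (f : R -> R) (a b : R) (n : nat) : R :=
  RInt (Derive_n f n) a b.

Definition bernoulli_approx (f : R -> R) (a b : R) (N : nat) (x : R) : R :=
  sum_f_R0 (fun n => char_number f a b n * powerRZ (b - a) (Z.of_nat n - 1)
                     * / INR (Factorial.fact n) * bernoulli_poly n ((x - a) / (b - a))) N.

(** Near [a] an analytic [f] has continuous derivatives of every order, so the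
    mean value [c_n^f / (b - a)] of [f^(n)] over [[a, b]] tends to [f^(n)(a)].
    On the other hand [(b - a)^n B_n ((x - a) / (b - a))] is the homogenised
    Bernoulli polynomial [sum_k C(n,k) B_(n-k) (x - a)^k (b - a)^(n-k)], a
    polynomial in [b - a] whose value at [b = a] is [(x - a)^n].  Hence the
    [n]-th term of the approximation tends to the [n]-th Taylor term. *)
From Stdlib Require Import Reals Lra Lia.
From Coquelicot Require Import Coquelicot.
Open Scope R_scope.

Lemma filterlim_Rmult {T} (F : (T -> Prop) -> Prop) {FF : Filter F}
  (f g : T -> R) (lf lg : R) :
  filterlim f F (locally lf) -> filterlim g F (locally lg) ->
  filterlim (fun t => f t * g t) F (locally (lf * lg)).
Proof.
  intros Hf Hg.
  exact (filterlim_comp_2 f g Rmult Hf Hg (@filterlim_mult R_AbsRing lf lg)).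
Qed.

Lemma filterlim_Rplus {T} (F : (T -> Prop) -> Prop) {FF : Filter F}
  (f g : T -> R) (lf lg : R) :
  filterlim f F (locally lf) -> filterlim g F (locally lg) ->
  filterlim (fun t => f t + g t) F (locally (lf + lg)).
Proof.
  intros Hf Hg.
  exact (filterlim_comp_2 f g Rplus Hf Hg (@filterlim_plus R_AbsRing R_NormedModule lf lg)).
Qed.

Lemma filterlim_sum_f_R0 {T} (F : (T -> Prop) -> Prop) {FF : Filter F}
  (g : nat -> T -> R) (l : nat -> R) (n : nat) :
  (forall k, (k <= n)%nat -> filterlim (g k) F (locally (l k))) ->
  filterlim (fun t => sum_f_R0 (fun k => g k t) n) F (locally (sum_f_R0 l n)).
Proof.
  induction n as [|n IH]; intros Hg; simpl.
  - apply Hg. lia.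
  - apply filterlim_Rplus; [exact FF | apply IH | apply Hg; lia].
    intros k Hk. apply Hg. lia.
Qed.

Lemma is_pseries_CV_radius (c : nat -> R) (z s : R) :
  is_pseries c z s -> Rbar_le (Rabs z) (CV_radius c).
Proof.
  intros Hs. apply Rbar_not_lt_le. intros Hout.
  apply (CV_disk_outside c z Hout), ex_series_lim_0, ex_pseries_R.
  now exists s.
Qed.

Lemma continuous_Derive_n_of_pseries (f : R -> R) (c : nat -> R) (y : R) (r : posreal) :
  (forall t, Rabs (t - y) < r -> is_pseries c (t - y) (f t)) ->
  forall n, continuous (Derive_n f n) y.
Proof.
  intros Hc n.
  pose proof (cond_pos r) as Hr.
  set (g := fun t => PSeries c (t + - y)).
  assert (Hrad : Rbar_le (r / 2) (CV_radius c)).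
  { replace (r / 2) with (Rabs (y + r / 2 - y)) by (rewrite Rabs_pos_eq; lra).
    apply (is_pseries_CV_radius c _ (f (y + r / 2))), Hc.
    rewrite Rabs_pos_eq; lra. }
  assert (Hfg : locally y (fun t => f t = g t)).
  { exists r. intros t Ht. symmetry. apply is_pseries_unique, Hc, Ht. }
  assert (Hin : locally y (fun t => Rbar_lt (Rabs (t + - y)) (CV_radius c))).
  { exists (pos_div_2 r). intros t Ht.
    eapply Rbar_lt_le_trans; [| exact Hrad]. exact Ht. }
  apply continuous_ext_loc with (g := fun t => PSeries (PS_derive_n n c) (t + - y)).
  - generalize (filter_and _ _ (locally_locally _ _ Hfg) Hin).
    apply filter_imp. intros t [Hfg_t Hin_t].
    rewrite (Derive_n_ext_loc _ _ n t Hfg_t). unfold g.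
    rewrite Derive_n_comp_trans. symmetry. now apply Derive_n_PSeries.
  - apply continuous_comp with (f := fun t => t + - y).
    + apply (ex_derive_continuous (fun t : R => t + - y)). auto_derive. exact I.
    + apply continuity_pt_filterlim, PSeries_continuity.
      rewrite CV_radius_derive_n. apply (locally_singleton _ _ Hin).
Qed.

Lemma analytic_on_continuous_Derive_n (f : R -> R) (l u : R) :
  analytic_on f l u -> forall y, l < y < u -> forall n, continuous (Derive_n f n) y.
Proof.
  intros Hf y Hy. destruct (Hf y Hy) as [r [c Hc]].
  exact (continuous_Derive_n_of_pseries f c y r Hc).
Qed.

Lemma filterlim_RInt_mean_at_right (g : R -> R) (a : R) :
  locally a (fun y => continuous g y) ->
  filterlim (fun b => RInt g a b / (b - a)) (at_right a) (locally (g a)).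
Proof.
  intros [rho Hc].
  assert (HD : is_derive (RInt g a) a (g a)).
  { apply (is_derive_RInt g (RInt g a) a a).
    - exists rho. intros b Hb.
      apply (@RInt_correct R_CompleteNormedModule),
            (@ex_RInt_continuous R_CompleteNormedModule).
      intros z Hz. apply Hc.
      revert Hb Hz. change (ball a rho ?t) with (Rabs (t - a) < rho).
      unfold Rmin, Rmax, Rabs.
      repeat destruct Rle_dec; repeat destruct Rcase_abs; intros; lra.
    - apply Hc, ball_center. }
  apply is_derive_Reals in HD.
  apply filterlim_locally. intros eps.
  destruct (HD eps (cond_pos eps)) as [delta Hdelta].
  exists delta. intros b Hb Hab.
  specialize (Hdelta (b - a) ltac:(lra) Hb).
  rewrite Rplus_minus, RInt_point, Rminus_0_r in Hdelta.
  exact Hdelta.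
Qed.

Definition bernoulli_poly_homog (n : nat) (X h : R) : R :=
  sum_f_R0 (fun k => Binomial.C n k * bernoulli_number (n - k) * X ^ k * h ^ (n - k)) n.

Lemma bernoulli_poly_scale (n : nat) (X h : R) : h <> 0 ->
  powerRZ h (Z.of_nat n - 1) * bernoulli_poly n (X / h) =
  bernoulli_poly_homog n X h / h.
Proof.
  intros Hh.
  replace (Z.of_nat n - 1)%Z with (Z.of_nat n + (-1))%Z by lia.
  rewrite powerRZ_add, <- pow_powerRZ by exact Hh.
  replace (powerRZ h (-1)) with (/ h) by (simpl; field; exact Hh).
  unfold bernoulli_poly, bernoulli_poly_homog, Rdiv.
  rewrite (Rmult_comm (h ^ n)), Rmult_assoc, (Rmult_comm (sum_f_R0 _ n) (/ h)), scal_sum.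
  f_equal. apply sum_eq. intros k Hk.
  replace (h ^ n) with (h ^ k * h ^ (n - k)) by (rewrite <- pow_add; f_equal; lia).
  rewrite Rpow_mult_distr, pow_inv.
  pose proof (pow_nonzero h k Hh).
  field. auto.
Qed.

Lemma bernoulli_poly_homog_0 (n : nat) (X : R) : bernoulli_poly_homog n X 0 = X ^ n.
Proof.
  unfold bernoulli_poly_homog.
  destruct n as [|m].
  - simpl. unfold bernoulli_number, Binomial.C. simpl. field.
  - rewrite tech5, sum_eq_R0.
    + rewrite Nat.sub_diag, C_n_n. unfold bernoulli_number. simpl. ring.
    + intros k Hk. rewrite (pow_i (S m - k)) by lia. ring.
Qed.

Lemma continuous_bernoulli_poly_homog (n : nat) (X h : R) :
  continuous (bernoulli_poly_homog n X) h.
Proof.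
  apply (filterlim_sum_f_R0 (locally h)
           (fun k h => Binomial.C n k * bernoulli_number (n - k) * X ^ k * h ^ (n - k))).
  intros k _. apply (ex_derive_continuous (fun h => _ * h ^ (n - k))).
  auto_derive. exact I.
Qed.

Lemma bernoulli_approx_term_at_right (f : R -> R) (a X : R) (n : nat) :
  locally a (fun y => continuous (Derive_n f n) y) ->
  filterlim (fun b => char_number f a b n * powerRZ (b - a) (Z.of_nat n - 1)
                      * / INR (Factorial.fact n) * bernoulli_poly n (X / (b - a)))
    (at_right a) (locally (Derive_n f n a / INR (Factorial.fact n) * X ^ n)).
Proof.
  intros Hc.
  apply filterlim_ext_loc with (f := fun b => RInt (Derive_n f n) a b / (b - a)
      * / INR (Factorial.fact n) * bernoulli_poly_homog n X (b - a)).
  { exists (mkposreal 1 Rlt_0_1). intros b _ Hab.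
    unfold char_number.
    transitivity (RInt (Derive_n f n) a b * / INR (Factorial.fact n) *
      (powerRZ (b - a) (Z.of_nat n - 1) * bernoulli_poly n (X / (b - a)))).
    - rewrite bernoulli_poly_scale by lra. unfold Rdiv. ring.
    - ring. }
  rewrite <- bernoulli_poly_homog_0.
  apply filterlim_Rmult; [apply _ | apply filterlim_Rmult; [apply _ | |] |].
  - now apply filterlim_RInt_mean_at_right.
  - apply filterlim_const.
  - apply (filterlim_filter_le_1 _ (@filter_le_within _ (locally a) _ _)).
    apply (filterlim_comp _ _ _ (fun b => b - a) (bernoulli_poly_homog n X)
             _ (locally 0)).
    + rewrite <- (Rminus_diag a) at 1.
      apply (ex_derive_continuous (fun b => b - a)). auto_derive. exact I.
    + apply continuous_bernoulli_poly_homog.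
Qed.

Theorem proposition2 (f : R -> R) (a l u : R) (Hlu : l < a < u)
  (Hf : analytic_on f l u) (N : nat) (x : R) :
  filterlim (fun b => bernoulli_approx f a b N x) (at_right a)
    (locally (sum_f_R0 (fun k => Derive_n f k a / INR (Factorial.fact k) * (x - a) ^ k) N)).
Proof.
  assert (Hc : locally a (fun y => forall n, continuous (Derive_n f n) y)).
  { apply (locally_open (fun y => l < y /\ y < u)).
    - apply open_and; [apply open_gt | apply open_lt].
    - intros y Hy. now apply (analytic_on_continuous_Derive_n f l u).
    - exact Hlu. }
  apply filterlim_sum_f_R0; [apply _ |].
  intros n _. apply bernoulli_approx_term_at_right.
  eapply filter_imp; [| exact Hc]. auto.
Qed.
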